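(* Consider algorithm TRIEST-IMPR (described in the context) run with integer parameter $M\ge 6$ on an insertion-only edge stream. Then $\tau^{(t)}=|\Delta^{(t)}|$ if $t\le M$, and $\mathbb{E}\left[\tau^{(t)}\right]=|\Delta^{(t)}|$ if $t>M$.
   Context: An insertion-only edge stream: at each time step $t=1,2,\dots$ an edge $e_t=\{u,v\}$ between two distinct vertices arrives, which is not already present; $G^{(t)}=(V^{(t)},E^{(t)})$ with $E^{(t)}=\{e_1,\dots,e_t\}$. A triangle in $G^{(t)}$ is a set of three edges $\{\{u,v\},\{v,w\},\{w,u\}\}\subseteq E^{(t)}$ with $u,v,w$ distinct; $\Delta^{(t)}$ is the set of all triangles of $G^{(t)}$. TRIEST-IMPR maintains an edge sample $\mathcal{S}$ (initially empty) and a counter $\tau$ (initially $0$). At time $t$, when $e_t=\{u,v\}$ arrives: first, $\tau$ is increased by $\eta^{(t)}\cdot|\mathcal{N}^{\mathcal{S}}_{u,v}|$, where $\eta^{(t)}=\max\{1,(t-1)(t-2)/(M(M-1))\}$ and $|\mathcal{N}^{\mathcal{S}}_{u,v}|$ is the number of vertices $c$ with both $\{c,u\}$ and $\{c,v\}$ in the current $\mathcal{S}$; then $\mathcal{S}$ is updated by reservoir sampling: if $t\le M$, $e_t$ is inserted into $\mathcal{S}$; if $t>M$, with probability $M/t$ an edge chosen uniformly at random from $\mathcal{S}$ is removed and $e_t$ is inserted, otherwise $\mathcal{S}$ is unchanged. The counter is never decreased. $\tau^{(t)}$ is the value of $\tau$ at the end of time step $t$, and is the algorithm's estimate of $|\Delta^{(t)}|$.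 *)

(* TRIEST-IMPR modelled as an explicit finite-support
   probability distribution (list of (weight, outcome)) over algorithm states. *)
From HB Require Import structures.
From mathcomp Require Import all_boot all_order all_algebra.
Set Implicit Arguments. Unset Strict Implicit. Unset Printing Implicit Defensive.
Import Order.TTheory GRing.Theory Num.Theory.
Local Open Scope ring_scope.

Definition dret (R : realFieldType) (A : Type) (x : A) : seq (R * A) := [:: (1, x)].

Definition dbind (R : realFieldType) (A B : Type)
  (d : seq (R * A)) (f : A -> seq (R * B)) : seq (R * B) :=
  flatten [seq [seq (pa.1 * qb.1, qb.2) | qb <- f pa.2] | pa <- d].

Definition expect (R : realFieldType) (A : Type) (d : seq (R * A)) (f : A -> R) : R :=
  \sum_(x <- d) x.1 * f x.2.

(* Edges are 2-element vertex sets; the stream is e 1, e 2, ... *)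
Definition edges_upto (V : finType) (e : nat -> {set V}) (t : nat) : {set {set V}} :=
  \bigcup_(1 <= i < t.+1) [set e i].

Definition is_triangle (V : finType) (T : {set {set V}}) : bool :=
  [exists u : V, exists v : V, exists w : V,
    [&& u != v, v != w, w != u & T == [set [set u; v]; [set v; w]; [set w; u]]]].

Definition triangles (V : finType) (e : nat -> {set V}) (t : nat) : {set {set {set V}}} :=
  [set T : {set {set V}} | (T \subset edges_upto e t) && is_triangle T].

Definition nbr_count (V : finType) (S : {set {set V}}) (uv : {set V}) : nat :=
  #|[set c : V | (c \notin uv) && [forall x in uv, [set c; x] \in S]]|.

Definition eta (R : realFieldType) (M t : nat) : R :=
  Num.max 1 (((t - 1) * (t - 2))%:R / (M * (M - 1))%:R).

Definition impr_step (R : realFieldType) (V : finType) (M : nat)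
  (e : nat -> {set V}) (t : nat) (st : {set {set V}} * R)
  : seq (R * ({set {set V}} * R)) :=
  let S := st.1 in
  let tau := st.2 + eta R M t * (nbr_count S (e t))%:R in
  if (t <= M)%N then dret R (e t |: S, tau)
  else [seq ((M%:R / t%:R) / #|S|%:R, (e t |: (S :\ f), tau)) | f <- enum S]
       ++ [:: (1 - M%:R / t%:R, (S, tau))].

Fixpoint impr_run (R : realFieldType) (V : finType) (M : nat)
  (e : nat -> {set V}) (t : nat) : seq (R * ({set {set V}} * R)) :=
  match t with
  | 0 => dret R (set0, 0)
  | t'.+1 => dbind (impr_run R M e t') (@impr_step R V M e t'.+1)
  end.

(* For t <= M the sample is the whole graph and eta = 1, so at step t the counter
   grows by the number of common neighbours of the endpoints of e_t in G^(t-1),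
   which is the number of triangles that e_t closes.
   For t > M, reservoir sampling keeps a uniform M-subset of the t-1 edges seen so
   far: a fixed set of k of them is sampled with probability M^_k / (t-1)^_k, by
   induction on t over the two outcomes of a sampling step.  For k = 2 this is
   1 / eta^(t), so every wedge closing a triangle with e_t contributes 1 to the
   expected increment of tau, and linearity of expectation gives
   E[tau^(t)] = |Delta^(t)|. *)

From Pilot Require Import Defs.
From HB Require Import structures.
From mathcomp Require Import all_boot all_order all_algebra.
From mathcomp Require Import ring zify.
Set Implicit Arguments. Unset Strict Implicit. Unset Printing Implicit Defensive.
Import Order.TTheory GRing.Theory Num.Theory.
Local Open Scope ring_scope.

Section Expectation.
Variable R : realFieldType.

Lemma expect_dbind (A B : Type) (d : seq (R * A)) (f : A -> seq (R * B))
    (g : B -> R) :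
  expect (dbind d f) g = expect d (fun a => expect (f a) g).
Proof.
rewrite /expect /dbind big_flatten /= big_map.
apply: eq_bigr => pa _; rewrite big_map big_distrr /=.
by apply: eq_bigr => qb _; rewrite mulrA.
Qed.

Lemma expectD (A : Type) (d : seq (R * A)) (f g : A -> R) :
  expect d (fun a => f a + g a) = expect d f + expect d g.
Proof. by rewrite /expect -big_split; apply: eq_bigr => x _; rewrite mulrDr. Qed.

Lemma expectZ (A : Type) (d : seq (R * A)) (c : R) (f : A -> R) :
  expect d (fun a => c * f a) = c * expect d f.
Proof. by rewrite /expect big_distrr; apply: eq_bigr => x _; rewrite mulrCA. Qed.

Lemma expect_cst (A : Type) (d : seq (R * A)) (c : R) :
  expect d (fun _ => c) = c * expect d (fun _ => 1).
Proof. by rewrite -expectZ; under [RHS]eq_bigr do rewrite mulr1. Qed.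

Lemma expect_sum (A I : Type) (r : seq I) (P : pred I) (d : seq (R * A))
    (F : I -> A -> R) :
  expect d (fun a => \sum_(i <- r | P i) F i a) = \sum_(i <- r | P i) expect d (F i).
Proof. by rewrite /expect exchange_big; apply: eq_bigr => x _; rewrite mulr_sumr. Qed.

Lemma eq_expect (A : Type) (d : seq (R * A)) (f g : A -> R) :
  f =1 g -> expect d f = expect d g.
Proof. by move=> fg; apply: eq_bigr => x _; rewrite fg. Qed.

Lemma eq_expect_in (A : eqType) (d : seq (R * A)) (f g : A -> R) :
  (forall x, x \in d -> f x.2 = g x.2) -> expect d f = expect d g.
Proof.
move=> fg; rewrite /expect big_seq_cond [RHS]big_seq_cond.
by apply: eq_bigr => x /andP[xd _]; rewrite fg.
Qed.

Lemma mem_dbind (A B : eqType) (d : seq (R * A)) (f : A -> seq (R * B)) x :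
  x \in dbind d f ->
  exists2 a, a \in d & exists2 q, q \in f a.2 & x = (a.1 * q.1, q.2).
Proof. by case/flattenP=> s /mapP[a ad ->] /mapP[q qf ->]; exists a => //; exists q. Qed.

End Expectation.

Lemma subsetU1_notin (T : finType) (x : T) (A B : {set T}) :
  x \notin A -> (A \subset x |: B) = (A \subset B).
Proof.
move=> xA; have AxA : A :\ x = A by apply/setDidPl; rewrite disjoint_sym disjoints1.
by rewrite -subDset AxA.
Qed.

Lemma sum_enum_notin (R : realFieldType) (T : finType) (A B : {set T}) :
  \sum_(x <- enum A) ((x \notin B)%:R : R) = #|A :\: B|%:R.
Proof.
rewrite big_enum -natr_sum; congr (_%:R).
rewrite -sum1_card (big_setID B) /= [X in (X + _)%N]big1 ?add0n.
  by apply: eq_bigr => x; rewrite !inE => /andP[-> _].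
by move=> x; rewrite !inE => /andP[_ ->].
Qed.

Section Triangles.
Variable V : finType.
Implicit Types (u v w x y z c : V) (E T : {set {set V}}).

Definition tri x y z : {set {set V}} := [set [set x; y]; [set y; z]; [set z; x]].

Definition triangles_of E : {set {set {set V}}} :=
  [set T : {set {set V}} | (T \subset E) && is_triangle T].

Lemma trianglesE (e : nat -> {set V}) t :
  triangles e t = triangles_of (edges_upto e t).
Proof. by []. Qed.

Lemma set2C x y : [set x; y] = [set y; x].
Proof. by apply/setP => z; rewrite !inE orbC. Qed.

Lemma forall_in_set2 (P : pred V) x y :
  [forall z in [set x; y], P z] = P x && P y.
Proof.
apply/forall_inP/andP => [Pxy | [Px Py] z].
  by split; apply: Pxy; rewrite !inE eqxx ?orbT.
by rewrite !inE => /orP[]/eqP->.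
Qed.

Lemma triC x y z : tri x y z = tri y z x.
Proof. by apply/setP => F; rewrite !inE; do 3!case: (F == _). Qed.

Lemma tri_swap x y z : tri x y z = tri y x z.
Proof.
rewrite /tri (set2C y x) (set2C x z) (set2C z y).
by apply/setP => F; rewrite !inE; do 3!case: (F == _).
Qed.

Lemma is_triangleP T :
  reflect (exists x y z, [/\ x != y, y != z, z != x & T = tri x y z])
          (is_triangle T).
Proof.
apply: (iffP existsP) => [[x /existsP[y /existsP[z /and4P[xy yz zx /eqP->]]]]|].
  by exists x, y, z.
case=> x [y [z [xy yz zx ->]]].
by exists x; apply/existsP; exists y; apply/existsP; exists z; rewrite xy yz zx eqxx.
Qed.

Lemma tri_through_edge T u v : u != v -> is_triangle T -> [set u; v] \in T ->
  exists2 c, c \notin [set u; v] & T = tri u v c.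
Proof.
move=> uv /is_triangleP[x [y [z [xy yz zx ->]]]].
suff base a b d : a != b -> b != d -> d != a -> [set u; v] = [set a; b] ->
    exists2 c, c \notin [set u; v] & tri a b d = tri u v c.
  rewrite !inE => /orP[/orP[]|] /eqP uvE; first exact: base.
    by rewrite triC; apply: base.
  by rewrite -triC; apply: base.
move=> ab bd da uvE; exists d; first by rewrite uvE !inE negb_or da eq_sym bd.
have: u \in [set a; b] by rewrite -uvE set21.
have: v \in [set a; b] by rewrite -uvE set22.
rewrite !inE => /orP[]/eqP vE /orP[]/eqP uE; subst u v; rewrite ?eqxx // in uv.
exact: tri_swap.
Qed.

Lemma cover_tri x y z : cover (tri x y z) = [set x; y; z].
Proof.
apply/setP => w; apply/bigcupP/idP => [[F] | ].
  by rewrite !inE => /orP[/orP[]|]/eqP-> ; rewrite !inE => /orP[]->; rewrite ?orbT.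
rewrite !inE => /orP[/orP[]|] /eqP->.
- by exists [set x; y]; rewrite !inE eqxx.
- by exists [set y; z]; rewrite !inE eqxx ?orbT.
- by exists [set z; x]; rewrite !inE eqxx ?orbT.
Qed.

Lemma tri_inj u v : {in [predC [set u; v]] &, injective (tri u v)}.
Proof.
move=> c c'; rewrite !inE !negb_or => /andP[cu cv] _ eqT.
have: c \in cover (tri u v c') by rewrite -eqT cover_tri !inE eqxx !orbT.
by rewrite cover_tri !inE (negbTE cu) (negbTE cv) => /eqP.
Qed.

Definition common_nbrs E (uv : {set V}) : {set V} :=
  [set c | (c \notin uv) && [forall x in uv, [set c; x] \in E]].

Lemma nbr_countE E uv : nbr_count E uv = #|common_nbrs E uv|.
Proof. by []. Qed.

Lemma mem_common_nbrs E u v c :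
  (c \in common_nbrs E [set u; v]) =
  [&& c \notin [set u; v], [set c; u] \in E & [set c; v] \in E].
Proof. by rewrite inE forall_in_set2. Qed.

Lemma tri_subsetU1 E u v c : c \notin [set u; v] ->
  (tri u v c \subset [set u; v] |: E) = ([set c; u] \in E) && ([set c; v] \in E).
Proof.
move=> cuv; have neq_uv w : ([set c; w] == [set u; v]) = false.
  by apply: contraNF cuv => /eqP <-; rewrite set21.
by rewrite !subUset !sub1set !in_setU1 eqxx (set2C v c) !neq_uv /= andbC.
Qed.

Lemma triangles_ofU1_avoiding E u v : [set u; v] \notin E ->
  triangles_of ([set u; v] |: E) :\: [set T : {set {set V}} | [set u; v] \in T] = triangles_of E.
Proof.
move=> uvE; apply/setP => T; rewrite !inE; case: (is_triangle T); rewrite ?andbF //.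
rewrite !andbT; apply/andP/idP => [[uvT TuvE] | TE]; last first.
  by split; [apply: contra uvE => /(subsetP TE) | apply: subset_trans TE (subsetU1 _ _)].
apply/subsetP => F FT; move/subsetP/(_ F FT): TuvE; rewrite in_setU1.
by case/orP => // /eqP FE; rewrite -FE FT in uvT.
Qed.

Lemma triangles_ofU1_through E u v : u != v ->
  triangles_of ([set u; v] |: E) :&: [set T : {set {set V}} | [set u; v] \in T] =
  tri u v @: common_nbrs E [set u; v].
Proof.
move=> uv; apply/setP => T; rewrite !inE; apply/idP/imsetP.
  case/andP=> /andP[TuvE triT] uvT.
  have [c cuv Tc] := tri_through_edge uv triT uvT.
  by exists c => //; rewrite mem_common_nbrs cuv -(tri_subsetU1 E cuv) -Tc.
case=> c; rewrite mem_common_nbrs => /and3P[cuv cu cv] ->.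
rewrite tri_subsetU1 // cu cv !inE eqxx /= andbT; apply/is_triangleP; exists u, v, c.
by move: cuv; rewrite !inE negb_or => /andP[cu' cv']; rewrite uv eq_sym cv' cu'.
Qed.

Lemma card_triangles_ofU1 E u v : u != v -> [set u; v] \notin E ->
  #|triangles_of ([set u; v] |: E)| = (#|triangles_of E| + nbr_count E [set u; v])%N.
Proof.
move=> uv uvE; rewrite -(cardsID [set T : {set {set V}} | [set u; v] \in T]) addnC.
rewrite triangles_ofU1_avoiding // triangles_ofU1_through // card_in_imset //.
by apply: sub_in2 (tri_inj (u:=u) (v:=v)) => c; rewrite mem_common_nbrs !inE => /andP[].
Qed.

Lemma nbr_count_sum E u v :
  nbr_count E [set u; v] =
  (\sum_(c | c \notin [set u; v]) ([set [set c; u]; [set c; v]] \subset E))%N.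
Proof.
rewrite nbr_countE -sum1_card big_mkcond [RHS]big_mkcond; apply: eq_bigr => c _.
by rewrite mem_common_nbrs subUset !sub1set; case: (c \in _).
Qed.

End Triangles.

Section Stream.
Variables (V : finType) (e : nat -> {set V}).

Definition simple_stream t :=
  forall i, (1 <= i <= t)%N -> #|e i| = 2%N /\ e i \notin edges_upto e i.-1.

Lemma simple_streamS t : simple_stream t.+1 -> simple_stream t.
Proof. by move=> st i /andP[i1 it]; apply: st; rewrite i1 ltnW. Qed.

Lemma edges_upto0 : edges_upto e 0 = set0.
Proof. by rewrite /edges_upto big_geq. Qed.

Lemma edges_uptoS t : edges_upto e t.+1 = e t.+1 |: edges_upto e t.
Proof. by rewrite /edges_upto big_nat_recr //= setUC. Qed.

Lemma card_edges_upto t : simple_stream t -> #|edges_upto e t| = t.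
Proof.
elim: t => [|t IH] st; first by rewrite edges_upto0 cards0.
have [_ /= fresh] := st t.+1 (leqnn _).
by rewrite edges_uptoS cardsU1 fresh IH //; apply: simple_streamS.
Qed.

Lemma card_trianglesS t : simple_stream t.+1 ->
  #|triangles e t.+1| = (#|triangles e t| + nbr_count (edges_upto e t) (e t.+1))%N.
Proof.
move=> st; have [/eqP/cards2P[u [v [uv et]]] fresh] := st t.+1 (leqnn _).
by rewrite !trianglesE edges_uptoS et card_triangles_ofU1 // -et.
Qed.

Lemma triangles0 : triangles e 0 = set0.
Proof.
apply/setP => T; rewrite trianglesE edges_upto0 !inE subset0.
apply/negP => /andP[/eqP -> /is_triangleP[x [y [z [_ _ _ T0]]]]].
have : [set x; y] \in tri x y z by rewrite !inE eqxx.
by rewrite -T0 inE.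
Qed.

End Stream.

Section TriestImpr.
Variables (R : realFieldType) (V : finType) (M : nat) (e : nat -> {set V}).
Hypothesis M_gt1 : (1 < M)%N.

Local Notation state := ({set {set V}} * R)%type.
Implicit Types (st : state) (q : R * state) (B : {set {set V}}).

Definition next_tau t st : R :=
  st.2 + Defs.eta R M t * (nbr_count st.1 (e t))%:R.

Lemma eta_leM t : (t <= M)%N -> Defs.eta R M t = 1.
Proof.
move=> tM; rewrite /Defs.eta max_l // ler_pdivrMr ?mul1r ?ler_nat ?leq_mul //; try lia.
by rewrite ltr0n muln_gt0; apply/andP; split; lia.
Qed.

Lemma mem_impr_step_early t st q :
  (t <= M)%N -> q \in impr_step M e t st -> q.2 = (e t |: st.1, next_tau t st).
Proof. by rewrite /impr_step => ->; rewrite inE => /eqP->. Qed.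

Lemma mem_impr_step_late t st q :
  (M < t)%N -> q \in impr_step M e t st ->
  q.2.1 = st.1 \/ exists2 f, f \in st.1 & q.2.1 = e t |: st.1 :\ f.
Proof.
rewrite /impr_step ltnNge => /negbTE-> /=; rewrite mem_cat => /orP[/mapP[f]|].
  by rewrite mem_enum => fS -> /=; right; exists f.
by rewrite inE => /eqP->; left.
Qed.

Lemma mem_impr_step_tau t st q :
  q \in impr_step M e t st -> q.2.2 = next_tau t st.
Proof.
rewrite /impr_step; case: ifP => _; first by rewrite inE => /eqP->.
by rewrite mem_cat => /orP[/mapP[f _ ->]|]; rewrite ?inE => // /eqP->.
Qed.

Lemma expect_impr_step_late t st (g : state -> R) : (M < t)%N ->
  expect (impr_step M e t st) g =
  \sum_(f <- enum st.1) M%:R / t%:R / #|st.1|%:R * g (e t |: st.1 :\ f, next_tau t st)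
  + (1 - M%:R / t%:R) * g (st.1, next_tau t st).
Proof.
by rewrite /impr_step ltnNge => /negbTE->; rewrite /expect big_cat big_map big_seq1.
Qed.

Lemma impr_step_mass t st : (t <= M)%N \/ #|st.1| = M ->
  expect (impr_step M e t st) (fun _ => 1) = 1.
Proof.
case: (leqP t M) => [tM _ | Mt]; first by rewrite /impr_step tM /expect big_seq1 mulr1.
case=> [// | cardS].
have [t0 M0] : t%:R != 0 :> R /\ M%:R != 0 :> R by rewrite !pnatr_eq0; split; lia.
rewrite expect_impr_step_late // big_enum /= sumr_const cardS -mulr_natr !mulr1.
by field; rewrite t0 M0.
Qed.

Definition run_invariant t st : Prop :=
  ((t <= M)%N -> st.1 = edges_upto e t /\ st.2 = (#|triangles e t|)%:R) /\
  ((M <= t)%N -> st.1 \subset edges_upto e t /\ #|st.1| = M).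

Lemma mem_impr_run_invariant t : simple_stream e t ->
  forall x, x \in impr_run R M e t -> run_invariant t x.2.
Proof.
elim: t => [|s IH] st x.
  rewrite inE => /eqP-> /=; split=> [_ | ]; last by lia.
  by rewrite edges_upto0 triangles0 cards0.
case/mem_dbind => a ad [q qs ->] /=.
have [IHearly IHlate] := IH (simple_streamS st) a ad.
have [_ fresh] := st s.+1 (leqnn _).
case: (leqP s.+1 M) => [sM | Ms].
  rewrite (mem_impr_step_early sM qs) /next_tau eta_leM //.
  have [-> ->] := IHearly (ltnW sM).
  rewrite mul1r -natrD -card_trianglesS // -edges_uptoS; split=> // Ms /=.
  by rewrite card_edges_upto //; split=> //; apply/eqP; rewrite eqn_leq sM Ms.
split=> [sM | _]; first by move: Ms; rewrite ltnNge sM.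
have [Sle cardS] := IHlate Ms.
have eS : e s.+1 \notin a.2.1 by apply: contra fresh => /(subsetP Sle).
rewrite edges_uptoS; case: (mem_impr_step_late Ms qs) => [-> | [f fS ->]].
  by split; first exact: subset_trans Sle (subsetU1 _ _).
split; first by apply: setUS; apply: subset_trans Sle; apply: subsetDl.
rewrite cardsU1 inE negb_and eS orbT /=.
by rewrite -cardS (cardsD1 f a.2.1) fS.
Qed.

Lemma mem_impr_run_early t x : simple_stream e t -> (t <= M)%N ->
  x \in impr_run R M e t -> x.2.1 = edges_upto e t /\ x.2.2 = (#|triangles e t|)%:R.
Proof. by move=> st tM /(mem_impr_run_invariant st) [/(_ tM)]. Qed.

Lemma mem_impr_run_late t x : simple_stream e t -> (M <= t)%N ->
  x \in impr_run R M e t -> x.2.1 \subset edges_upto e t /\ #|x.2.1| = M.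
Proof. by move=> st Mt /(mem_impr_run_invariant st) [_ /(_ Mt)]. Qed.

Lemma impr_run_mass t : simple_stream e t -> expect (impr_run R M e t) (fun _ => 1) = 1.
Proof.
elim: t => [|s IH] st; first by rewrite /expect big_seq1 mulr1.
have st' := simple_streamS st.
rewrite /= expect_dbind -[RHS](IH st'); apply: eq_expect_in => a ad.
apply: impr_step_mass; case: (leqP s.+1 M) => sM; [by left | right].
by case: (mem_impr_run_late st' _ ad).
Qed.

Lemma expect_impr_step_tau t st : (t <= M)%N \/ #|st.1| = M ->
  expect (impr_step M e t st) (fun x => x.2) = next_tau t st.
Proof.
move=> early_or_full; rewrite (eq_expect_in (g := fun=> next_tau t st)).
  by rewrite expect_cst impr_step_mass ?mulr1.
by move=> q /mem_impr_step_tau.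
Qed.

Lemma expect_impr_step_subset_notin t st B :
  (M < t)%N -> #|st.1| = M -> e t \notin B ->
  expect (impr_step M e t st) (fun x => (B \subset x.1)%:R) =
  (t - #|B|)%:R / t%:R * (B \subset st.1)%:R.
Proof.
move=> Mt cardS eB; rewrite expect_impr_step_late //=.
under eq_bigr do rewrite subsetU1_notin // subsetD1.
have [BS | BnS] /= := boolP (B \subset st.1); last by rewrite big1 ?add0r ?mulr0.
have [t0 M0] : t%:R != 0 :> R /\ M%:R != 0 :> R by rewrite !pnatr_eq0; split; lia.
have leBM : (#|B| <= M)%N by rewrite -cardS subset_leq_card.
rewrite -mulr_sumr sum_enum_notin cardsD (setIidPr BS) cardS.
rewrite !natrB ?(leq_trans leBM (ltnW Mt)) //.
by rewrite !mulr1; field; rewrite t0 M0.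
Qed.

Lemma expect_impr_step_subset_in t st B :
  (M < t)%N -> #|st.1| = M -> e t \in B -> e t \notin st.1 ->
  expect (impr_step M e t st) (fun x => (B \subset x.1)%:R) =
  (M - #|B :\ e t|)%:R / t%:R * (B :\ e t \subset st.1)%:R.
Proof.
move=> Mt cardS eB eS; rewrite expect_impr_step_late //=.
under eq_bigr do rewrite -subDset subsetD1.
have -> : (B \subset st.1) = false by apply: contraNF eS => /subsetP; apply.
have [BS | BnS] /= := boolP (B :\ e t \subset st.1); last by rewrite big1 ?add0r ?mulr0.
have [t0 M0] : t%:R != 0 :> R /\ M%:R != 0 :> R by rewrite !pnatr_eq0; split; lia.
rewrite -mulr_sumr sum_enum_notin cardsD (setIidPr BS) cardS.
by rewrite !mulr1 mulr0 addr0; field; rewrite t0 M0.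
Qed.

Lemma expect_impr_run_subsetS s B : simple_stream e s.+1 -> (M <= s)%N ->
  expect (impr_run R M e s.+1) (fun x => (B \subset x.1)%:R) =
  if e s.+1 \in B then
    (M - #|B :\ e s.+1|)%:R / s.+1%:R *
      expect (impr_run R M e s) (fun x => (B :\ e s.+1 \subset x.1)%:R)
  else (s.+1 - #|B|)%:R / s.+1%:R * expect (impr_run R M e s) (fun x => (B \subset x.1)%:R).
Proof.
move=> st Ms; have [_ /= fresh] := st s.+1 (leqnn _).
rewrite /= expect_dbind; case: ifP => eB; rewrite -expectZ; apply: eq_expect_in => a.
  move=> /(mem_impr_run_late (simple_streamS st) Ms) [aE cardS].
  by apply: expect_impr_step_subset_in; rewrite ?eB //; apply: contra fresh => /(subsetP aE).
move=> /(mem_impr_run_late (simple_streamS st) Ms) [_ cardS].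
by apply: expect_impr_step_subset_notin; rewrite ?eB.
Qed.

Lemma expect_impr_run_subset s B :
  simple_stream e s -> (M <= s)%N -> B \subset edges_upto e s ->
  expect (impr_run R M e s) (fun x => (B \subset x.1)%:R) =
  (M ^_ #|B|)%:R / (s ^_ #|B|)%:R.
Proof.
elim: s B => [|s IH] B st Ms BE; first by lia.
have [sM | leMs] := ltnP s M.
  have sM1 : s.+1 = M by lia.
  have MB0 : (M ^_ #|B|)%:R != 0 :> R.
    by rewrite pnatr_eq0 -lt0n ffact_gt0 -sM1 -(card_edges_upto st) subset_leq_card.
  have -> : (M ^_ #|B|)%:R / (s.+1 ^_ #|B|)%:R = 1 :> R by rewrite sM1 divff.
  rewrite -[RHS](impr_run_mass st); apply: eq_expect_in => x.
  by move=> /(mem_impr_run_early st sM) [-> _]; rewrite BE.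
have st' := simple_streamS st.
have t0 : s.+1%:R != 0 :> R by rewrite pnatr_eq0.
have card_le (A : {set {set V}}) : A \subset edges_upto e s -> (#|A| <= s)%N.
  by move=> AE; rewrite -[X in (_ <= X)%N](card_edges_upto st') subset_leq_card.
rewrite expect_impr_run_subsetS //; case: ifP => eB.
  have B'E : B :\ e s.+1 \subset edges_upto e s by rewrite subDset -edges_uptoS.
  rewrite IH // (cardsD1 (e s.+1) B) eB ffactSS ffactnSr !natrM.
  by field; rewrite addrC natr1 t0 pnatr_eq0 -lt0n ffact_gt0 card_le.
have BEs : B \subset edges_upto e s by rewrite -(subsetU1_notin _ (negbT eB)) -edges_uptoS.
have tB0 : (s.+1 - #|B|)%:R != 0 :> R by rewrite pnatr_eq0 subn_eq0 -ltnNge ltnS card_le.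
have ffactS : (s.+1 ^_ #|B| * (s.+1 - #|B|))%N = (s.+1 * s ^_ #|B|)%N.
  by rewrite -ffactnSr ffactSS.
rewrite IH // -[(s ^_ _)%:R](mulKf t0) -natrM -ffactS natrM.
by field; rewrite tB0 addrC natr1 t0 pnatr_eq0 -lt0n ffact_gt0 ltnW ?ltnS ?card_le.
Qed.

Lemma expect_impr_run_nbr_count s : simple_stream e s.+1 -> (M <= s)%N ->
  expect (impr_run R M e s) (fun x : state => (nbr_count x.1 (e s.+1))%:R) =
  (M ^_ 2)%:R / (s ^_ 2)%:R * (nbr_count (edges_upto e s) (e s.+1))%:R.
Proof.
move=> st Ms; have st' := simple_streamS st.
have [/eqP/cards2P[u [v [uv ->]]] _] := st s.+1 (leqnn _).
under eq_expect do rewrite nbr_count_sum natr_sum.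
rewrite expect_sum nbr_count_sum natr_sum mulr_sumr; apply: eq_bigr => c cuv.
set W := [set [set c; u]; [set c; v]].
have cardW : #|W| = 2%N.
  rewrite cards2; suff -> : [set c; u] != [set c; v] by [].
  apply/eqP => /setP /(_ v); rewrite !inE eqxx orbT => /orP[]/eqP vE.
    by move: cuv; rewrite -vE !inE eqxx orbT.
  by rewrite vE eqxx in uv.
have [WE | WnE] := boolP (W \subset edges_upto e s).
  by rewrite expect_impr_run_subset // cardW mulr1.
rewrite mulr0 -[RHS](mul0r (expect (impr_run R M e s) (fun _ => 1))) -expect_cst.
apply: eq_expect_in => x /(mem_impr_run_late st' Ms) [Sle _].
by apply/eqP; rewrite pnatr_eq0 eqb0; apply: contra WnE => /subset_trans; apply.
Qed.

Lemma eta_mul_sample_prob s : (M <= s)%N ->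
  Defs.eta R M s.+1 * ((M ^_ 2)%:R / (s ^_ 2)%:R) = 1.
Proof.
move=> Ms; rewrite /Defs.eta (ffactnSr M 1) (ffactnSr s 1) !ffactn1 !subSS subn0.
have [M0 s0] : (M * (M - 1))%:R != 0 :> R /\ (s * (s - 1))%:R != 0 :> R.
  by rewrite !pnatr_eq0 !muln_eq0; split; lia.
rewrite max_r; first by rewrite mulrC -invf_div mulVf // mulf_neq0 ?invr_eq0.
by rewrite ler_pdivlMr ?mul1r ?ler_nat ?leq_mul ?ltr0n ?lt0n //; lia.
Qed.

Lemma expect_impr_run_tau t : simple_stream e t -> (M <= t)%N ->
  expect (impr_run R M e t) (fun x : state => x.2) = (#|triangles e t|)%:R.
Proof.
elim: t => [|s IH] st Ms; first by lia.
have st' := simple_streamS st.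
have [sM | leMs] := ltnP s M.
  rewrite (eq_expect_in (g := fun=> (#|triangles e s.+1|)%:R)).
    by rewrite expect_cst impr_run_mass ?mulr1.
  by move=> x /(mem_impr_run_early st sM) [].
rewrite /= expect_dbind (eq_expect_in (g := next_tau s.+1)); last first.
  by move=> a /(mem_impr_run_late st' leMs) [_ cardS]; apply: expect_impr_step_tau; right.
rewrite /next_tau expectD expectZ IH // expect_impr_run_nbr_count // mulrA.
by rewrite eta_mul_sample_prob // mul1r card_trianglesS // natrD.
Qed.

End TriestImpr.

Unset Implicit Arguments.
Theorem theorem4p12 (R : realFieldType) (V : finType) (M : nat)
  (e : nat -> {set V}) (t : nat) :
  (6 <= M)%N ->
  (forall i : nat, (1 <= i <= t)%N ->
     #|e i| = 2%N /\ e i \notin edges_upto e i.-1) ->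
  ((t <= M)%N ->
     forall x, x \in impr_run R M e t -> x.2.2 = (#|triangles e t|)%:R)
  /\
  ((M < t)%N ->
     expect (impr_run R M e t) (fun st => st.2) = (#|triangles e t|)%:R).
Proof.
move=> M6 st; have M_gt1 : (1 < M)%N by lia.
split=> [tM x | /ltnW]; first by case/(mem_impr_run_early M_gt1 st tM).
exact: expect_impr_run_tau.
Qed.
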